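(* Let $A$ be a vector space with bilinear operations $\star,[-,-]$, and $x\cdot y=x\star y+y\star x$. (1) If $(A,\cdot,[-,-])$ is a transposed Poisson algebra, $(A,\star)$ is Zinbiel, and $(\mathcal{L}_{\star},\mathrm{ad},A)$ is a representation of the transposed Poisson algebra $(A,\cdot,[-,-])$, then $(A,\star,[-,-])$ is a TZLO algebra, i.e. $x\star[y,z]=[x,y]\star z=[x,y\star z]=0$ for all $x,y,z\in A$. (2) Conversely, if $(A,\star,[-,-])$ is a TZLO algebra, then $(A,\cdot,[-,-])$ is a transposed Poisson algebra with representation $(\mathcal{L}_{\star},\mathrm{ad},A)$.
   Context: Finite-dimensional spaces, characteristic zero. $\mathcal{L}_\star(x)y=x\star y$, $\mathrm{ad}(x)y=[x,y]$. Zinbiel: $x\star(y\star z)=(x\star y)\star z+(y\star x)\star z$. Transposed Poisson algebra: $(A,\cdot)$ commutative associative, $(A,[-,-])$ Lie, $2z\cdot[x,y]=[z\cdot x,y]+[x,z\cdot y]$. A representation of a transposed Poisson algebra is $(\mu,\rho,V)$ with $\mu(x\cdot y)=\mu(x)\mu(y)$, $\rho([x,y])=[\rho(x),\rho(y)]$, $2\mu(x)\rho(y)=\rho(x\cdot y)+\rho(y)\mu(x)$, $2\mu([x,y])=\rho(x)\mu(y)-\rho(y)\mu(x)$. A TZLO algebra is $(A,\star,[-,-])$ with $(A,\star)$ Zinbiel, $(A,[-,-])$ Lie, and $x\star[y,z]=[x,y]\star z=[x,y\star z]=0$ for all $x,y,z$. *)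

From HB Require Import structures.
From mathcomp Require Import all_boot all_order all_algebra.
Set Implicit Arguments. Unset Strict Implicit. Unset Printing Implicit Defensive.
Import GRing.Theory.
Local Open Scope ring_scope.

Section Defs.
Variable K : fieldType.

Definition bilinear_op (A : lmodType K) (op : A -> A -> A) : Prop :=
  (forall x, linear (op x)) /\ (forall y, linear (fun x => op x y)).

Definition zinbiel (A : lmodType K) (star : A -> A -> A) : Prop :=
  forall x y z, star x (star y z) = star (star x y) z + star (star y x) z.

Definition lie (A : lmodType K) (br : A -> A -> A) : Prop :=
  (forall x, br x x = 0) /\
  (forall x y z, br x (br y z) + br y (br z x) + br z (br x y) = 0).

Definition com_assoc (A : lmodType K) (dot : A -> A -> A) : Prop :=
  (forall x y, dot x y = dot y x) /\
  (forall x y z, dot (dot x y) z = dot x (dot y z)).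

Definition transposed_poisson (A : lmodType K) (dot br : A -> A -> A) : Prop :=
  com_assoc dot /\ lie br /\
  forall x y z, (dot z (br x y)) *+ 2 = br (dot z x) y + br x (dot z y).

(* representation (mu, rho, V) of the transposed Poisson algebra (A, dot, br):
   mu, rho : A -> End(V) linear maps, identities stated pointwise on V *)
Definition tp_representation (A V : lmodType K) (dot br : A -> A -> A)
  (mu rho : A -> V -> V) : Prop :=
  [/\ (forall x, linear (mu x)), (forall x, linear (rho x)),
      (forall v, linear (fun x => mu x v)), (forall v, linear (fun x => rho x v)) &
  [/\ (forall x y v, mu (dot x y) v = mu x (mu y v)),
      (forall x y v, rho (br x y) v = rho x (rho y v) - rho y (rho x v)),
      (forall x y v, (mu x (rho y v)) *+ 2 = rho (dot x y) v + rho y (mu x v)) &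
      (forall x y v, (mu (br x y) v) *+ 2 = rho x (mu y v) - rho y (mu x v))]].

Definition tzlo (A : lmodType K) (star br : A -> A -> A) : Prop :=
  [/\ zinbiel star, lie br &
      forall x y z, [/\ star x (br y z) = 0, star (br x y) z = 0 & br x (star y z) = 0]].

End Defs.

From HB Require Import structures.
From mathcomp Require Import all_boot all_order all_algebra.
Import GRing.Theory.
Local Open Scope ring_scope.

(** Subtracting the representation identity 2 z⋆[x,y] = [z·x,y] + [x,z⋆y]
    from the transposed Poisson identity for z·[x,y] leaves
    2 [x,y]⋆z = [x,y⋆z].  Fed into 2 [y,x]⋆z = [y,x⋆z] - [x,y⋆z], this forces
    [x,y⋆z] = 0, and then [x,y]⋆z = 0 and x⋆[y,z] = 0 because 2 is invertible.
    Conversely, in a Zinbiel algebra x·y is commutative associative with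
    L⋆(x·y) = L⋆(x) L⋆(y); in a TZLO algebra every remaining identity has
    both sides 0, except that ad is a representation, which is Jacobi. *)

Section LinearMaps.
Variables (K : fieldType) (A : lmodType K) (f : A -> A).
Hypothesis linf : linear f.

Lemma linear_morphD : {morph f : u v / u + v}.
Proof. by move=> u v; have := linf 1 u v; rewrite !scale1r. Qed.

Lemma linear_morphN : {morph f : u / - u}.
Proof.
have fB := zmod_morphism_linear linf.
have f0 : f 0 = 0 by have := fB 0 0; rewrite !subrr.
by move=> u; rewrite -sub0r fB f0 sub0r.
Qed.

End LinearMaps.

Lemma char0_mulr2n_eq0 {K : fieldType} {A : lmodType K} (a : A) :
  [pchar K] =i pred0 -> (a *+ 2 == 0) = (a == 0).
Proof. by move=> charK; rewrite -scaler_nat scaler_eq0 (pcharf0P K).1. Qed.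

Section TransposedZinbielLie.
Variables (K : fieldType) (A : lmodType K) (star br : A -> A -> A).
Hypotheses (Hstar : bilinear_op star) (Hbr : bilinear_op br).

Definition anticommutator (x y : A) := star x y + star y x.
Local Notation dot := anticommutator.

Let starDr x : {morph star x : u v / u + v}.
Proof. exact: linear_morphD (Hstar.1 x). Qed.
Let starDl y : {morph star^~ y : u v / u + v}.
Proof. exact: linear_morphD (Hstar.2 y). Qed.
Let brDr x : {morph br x : u v / u + v}.
Proof. exact: linear_morphD (Hbr.1 x). Qed.
Let brDl y : {morph br^~ y : u v / u + v}.
Proof. exact: linear_morphD (Hbr.2 y). Qed.
Let brNr x : {morph br x : u / - u}.
Proof. exact: linear_morphN (Hbr.1 x). Qed.

Lemma lie_antisym : lie br -> forall x y, br x y = - br y x.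
Proof.
move=> [br_xx _] x y; apply/eqP; rewrite -addr_eq0.
by have := br_xx (x + y); rewrite brDl !brDr !br_xx add0r addr0 => ->.
Qed.

Lemma lie_bracketl : lie br ->
  forall x y v, br (br x y) v = br x (br y v) - br y (br x v).
Proof.
move=> lieA x y v; have [_ jacobi] := lieA.
have := jacobi x y v; rewrite (lie_antisym lieA v x) (lie_antisym lieA v) brNr.
by move/eqP; rewrite subr_eq0 => /eqP ->.
Qed.

Section RepresentationToTZLO.
Hypotheses (tpA : transposed_poisson dot br)
           (repA : tp_representation dot br star br).

Lemma star_bracketl_mulr2n x y z : star (br x y) z *+ 2 = br x (star y z).
Proof.
have [_ [_ tp_xyz]] := tpA; have [_ _ _ _ [_ _ rep_mu_rho _]] := repA.
apply: (@addrI _ (star z (br x y) *+ 2)).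
by rewrite -mulrnDl tp_xyz rep_mu_rho brDr addrA.
Qed.

Lemma bracket_star_eq0 x y z : br x (star y z) = 0.
Proof.
have [_ _ _ _ [_ _ _ rep_mu_br]] := repA.
have := rep_mu_br y x z; rewrite star_bracketl_mulr2n -[LHS]addr0.
by move/addrI/esym/eqP; rewrite oppr_eq0 => /eqP.
Qed.

Lemma star_bracketl_eq0 (charK : [pchar K] =i pred0) x y z :
  star (br x y) z = 0.
Proof.
by apply/eqP; rewrite -(char0_mulr2n_eq0 _ charK) star_bracketl_mulr2n
  bracket_star_eq0.
Qed.

Lemma star_bracketr_eq0 (charK : [pchar K] =i pred0) x y z :
  star x (br y z) = 0.
Proof.
have [_ [lieA _]] := tpA; have [_ _ _ _ [_ _ rep_mu_rho _]] := repA.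
apply/eqP; rewrite -(char0_mulr2n_eq0 _ charK) rep_mu_rho brDl.
by rewrite !(lie_antisym lieA _ z) !bracket_star_eq0 oppr0 !addr0.
Qed.

End RepresentationToTZLO.

Lemma tzlo_of_tp_representation : [pchar K] =i pred0 ->
  transposed_poisson dot br -> zinbiel star ->
  tp_representation dot br star br -> tzlo star br.
Proof.
move=> charK tpA zinA repA; have [_ [lieA _]] := tpA.
split=> // x y z; split; [exact: star_bracketr_eq0 | exact: star_bracketl_eq0 |].
exact: bracket_star_eq0.
Qed.

Section ZinbielProduct.
Hypothesis zinA : zinbiel star.

Lemma star_dotl x y z : star (dot x y) z = star x (star y z).
Proof. by rewrite zinA starDl. Qed.

Lemma zinbiel_com_assoc : com_assoc dot.
Proof.
have star_left_comm x y z : star x (star y z) = star y (star x z).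
  by rewrite -!star_dotl /anticommutator addrC.
split=> [x y | x y z]; first by rewrite /anticommutator addrC.
rewrite [LHS]/anticommutator [RHS]/anticommutator !star_dotl !starDr.
by rewrite (star_left_comm z x y) (star_left_comm z y x) addrA.
Qed.

End ZinbielProduct.

Section TZLOToRepresentation.
Hypothesis tzloA : tzlo star br.

Let lieA : lie br. Proof. by case: tzloA. Qed.
Let star_bracketr x y z : star x (br y z) = 0.
Proof. by case: tzloA => _ _ /(_ x y z) []. Qed.
Let star_bracketl x y z : star (br x y) z = 0.
Proof. by case: tzloA => _ _ /(_ x y z) []. Qed.
Let bracket_star x y z : br x (star y z) = 0.
Proof. by case: tzloA => _ _ /(_ x y z) []. Qed.

Lemma tzlo_bracket_dotl x y z : br (dot x y) z = 0.
Proof.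
by rewrite brDl !(lie_antisym lieA _ z) !bracket_star oppr0 addr0.
Qed.

Lemma transposed_poisson_of_tzlo : transposed_poisson dot br.
Proof.
have [zinA _ _] := tzloA.
split; first exact: zinbiel_com_assoc.
split=> // x y z.
by rewrite /anticommutator star_bracketl star_bracketr !tzlo_bracket_dotl
  brDr !bracket_star !addr0 mul0rn.
Qed.

Lemma tp_representation_of_tzlo : tp_representation dot br star br.
Proof.
have [zinA _ _] := tzloA; have [[starL starR] [brL brR]] := (Hstar, Hbr).
split=> //; split=> x y v.
- by rewrite star_dotl.
- exact: lie_bracketl.
- by rewrite star_bracketr tzlo_bracket_dotl bracket_star addr0 mul0rn.
- by rewrite star_bracketl !bracket_star subrr mul0rn.
Qed.

End TZLOToRepresentation.

End TransposedZinbielLie.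

Theorem mainTheorem10 (K : fieldType) (A : vectType K)
  (charK : [pchar K] =i pred0)
  (star br : A -> A -> A)
  (Hstar : bilinear_op star) (Hbr : bilinear_op br) :
  let dot := fun x y => star x y + star y x in
  (transposed_poisson dot br -> zinbiel star ->
     tp_representation dot br star br -> tzlo star br) /\
  (tzlo star br ->
     transposed_poisson dot br /\ tp_representation dot br star br).
Proof.
move=> dot; split; first exact: tzlo_of_tp_representation.
move=> tzloA; split.
- exact: transposed_poisson_of_tzlo.
- exact: tp_representation_of_tzlo.
Qed.
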